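(* Let $\mathbf{C}$ be a category with a stable system of monics $\mathcal{M}$ that has pushouts along $\mathcal{M}$-morphisms and such that $\mathcal{M}$-morphisms are stable under pushout. Then the source functor $S:\mathsf{PO}_v(\mathbf{C},\mathcal{M})\to\mathbf{C}|_{\mathcal{M}}$ is a Grothendieck opfibration, with op-Cartesian liftings provided by pushouts: for an object $f:A\to B$ and an $\mathcal{M}$-morphism $\alpha:A\rightarrowtail A'$, the pushout $A'\xrightarrow{f'}B'\xleftarrow{\beta}B$ of $(\alpha,f)$ yields an op-Cartesian morphism $(\alpha,\beta):f\to f'$.
   Context: A stable system of monics $\mathcal{M}$ in $\mathbf{C}$ is a class of monomorphisms containing all isomorphisms, closed under composition, and stable under pullback; $\rightarrowtail$ denotes morphisms in $\mathcal{M}$. ''Has pushouts along $\mathcal{M}$-morphisms'': pushouts of spans $A'\leftarrowtail A\to B$ exist. ''$\mathcal{M}$-morphisms are stable under pushout'': in any pushout $A'\to B'\xleftarrow{\beta}B$ of a span $A'\xleftarrow{\alpha}A\to B$ with $\alpha\in\mathcal{M}$, one has $\beta\in\mathcal{M}$. $\mathbf{C}|_{\mathcal{M}}$ has the objects of $\mathbf{C}$ and the $\mathcal{M}$-morphisms as morphisms. The category $\mathsf{PO}_v(\mathbf{C},\mathcal{M})$: objects are morphisms $f:A\to B$ of $\mathbf{C}$; a morphism from $f:A\to B$ to $f':A'\to B'$ is a pair $(\alpha,\beta)$ of $\mathcal{M}$-morphisms $\alpha:A\rightarrowtail A'$, $\beta:B\rightarrowtail B'$ with $\beta\circ f=f'\circ\alpha$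 such that this square is a pushout of $(\alpha,f)$; composition is componentwise. $S$ sends $f:A\to B$ to $A$ and $(\alpha,\beta)$ to $\alpha$. For a functor $P:\mathbf{E}\to\mathbf{B}$, a morphism $\varphi:e\to e'$ is op-Cartesian if for every $\psi:e\to e''$ and $g:P(e')\to P(e'')$ with $g\circ P(\varphi)=P(\psi)$ there is a unique $\chi:e'\to e''$ with $\chi\circ\varphi=\psi$ and $P(\chi)=g$; $P$ is a Grothendieck opfibration if every $f:b\to b'$ has an op-Cartesian lifting at every $e$ with $P(e)=b$. *)

From Stdlib Require Import ProofIrrelevance.

Set Implicit Arguments.
Unset Strict Implicit.

Record Category := {
  ob :> Type;
  hom : ob -> ob -> Type;
  idm : forall a, hom a a;
  cmp : forall a b c, hom b c -> hom a b -> hom a c;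
  cmp_id_l : forall a b (f : hom a b), cmp (idm b) f = f;
  cmp_id_r : forall a b (f : hom a b), cmp f (idm a) = f;
  cmp_assoc : forall a b c d (h : hom c d) (g : hom b c) (f : hom a b),
      cmp h (cmp g f) = cmp (cmp h g) f
}.
Arguments hom {C} : rename.
Arguments idm {C} a : rename.
Arguments cmp {C a b c} : rename.

Declare Scope cat_scope.
Notation "g ∘ f" := (cmp g f) (at level 40, left associativity) : cat_scope.
Open Scope cat_scope.

Record Functor (E B : Category) := {
  fob :> E -> B;
  fhom : forall a b, hom a b -> hom (fob a) (fob b);
  fhom_id : forall a, fhom (idm a) = idm (fob a);
  fhom_cmp : forall a b c (g : hom b c) (f : hom a b),
      fhom (g ∘ f) = fhom g ∘ fhom f
}.
Arguments fhom {E B} P {a b} : rename.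

Definition is_mono {C : Category} {a b : C} (m : hom a b) : Prop :=
  forall z (g h : hom z a), m ∘ g = m ∘ h -> g = h.

Definition is_iso {C : Category} {a b : C} (f : hom a b) : Prop :=
  exists g : hom b a, g ∘ f = idm a /\ f ∘ g = idm b.

Definition is_pullback {C : Category} {A B X P : C}
  (m : hom A B) (g : hom X B) (m' : hom P X) (g' : hom P A) : Prop :=
  m ∘ g' = g ∘ m' /\
  forall Z (x : hom Z X) (y : hom Z A), m ∘ y = g ∘ x ->
    exists u : hom Z P, (m' ∘ u = x /\ g' ∘ u = y) /\
      forall v : hom Z P, m' ∘ v = x /\ g' ∘ v = y -> v = u.

Definition is_pushout {C : Category} {A A' B B' : C}
  (a : hom A A') (f : hom A B) (f' : hom A' B') (b : hom B B') : Prop :=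
  f' ∘ a = b ∘ f /\
  forall X (p : hom A' X) (q : hom B X), p ∘ a = q ∘ f ->
    exists u : hom B' X, (u ∘ f' = p /\ u ∘ b = q) /\
      forall v : hom B' X, v ∘ f' = p /\ v ∘ b = q -> v = u.

Record StableMonics (C : Category) := {
  inM : forall a b : C, hom a b -> Prop;
  M_mono : forall a b (m : hom a b), inM m -> is_mono m;
  M_iso : forall a b (m : hom a b), is_iso m -> inM m;
  M_comp : forall a b c (g : hom b c) (f : hom a b), inM g -> inM f -> inM (g ∘ f);
  M_pb : forall A B X P (m : hom A B) (g : hom X B) (m' : hom P X) (g' : hom P A),
      inM m -> is_pullback m g m' g' -> inM m'
}.
Arguments inM {C} M {a b} : rename.
Arguments M_comp {C} M {a b c g f} : rename.
Arguments M_iso {C} M {a b m} : rename.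

Definition has_pushouts_along {C : Category} (M : StableMonics C) : Prop :=
  forall (A A' B : C) (a : hom A A') (f : hom A B), inM M a ->
    exists (B' : C) (f' : hom A' B') (b : hom B B'), is_pushout a f f' b.

Definition M_stable_under_pushout {C : Category} (M : StableMonics C) : Prop :=
  forall (A A' B B' : C) (a : hom A A') (f : hom A B) (f' : hom A' B') (b : hom B B'),
    inM M a -> is_pushout a f f' b -> inM M b.

Lemma iso_id {C : Category} (a : C) : is_iso (idm a).
Proof. exists (idm a); split; apply cmp_id_l. Qed.

Section Restrict.
Variables (C : Category) (M : StableMonics C).

Definition Mhom (a b : C) := { m : hom a b | inM M m }.

Lemma Mhom_eq a b (x y : Mhom a b) : proj1_sig x = proj1_sig y -> x = y.
Proof.
  destruct x as [x hx], y as [y hy]; simpl; intros ->.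
  f_equal; apply proof_irrelevance.
Qed.

Definition Mid (a : C) : Mhom a a := exist _ (idm a) (M_iso M (iso_id a)).
Definition Mcmp a b c (g : Mhom b c) (f : Mhom a b) : Mhom a c :=
  exist _ (proj1_sig g ∘ proj1_sig f) (M_comp M (proj2_sig g) (proj2_sig f)).

Definition CM : Category.
Proof.
  refine {| ob := ob C; hom := Mhom; idm := Mid; cmp := Mcmp |}.
  - intros; apply Mhom_eq; apply cmp_id_l.
  - intros; apply Mhom_eq; apply cmp_id_r.
  - intros; apply Mhom_eq; apply cmp_assoc.
Defined.
End Restrict.

Section POv.
Variables (C : Category) (M : StableMonics C).

Record POob := { src : C; tgt : C; arr : hom src tgt }.

Record POhom (x y : POob) := {
  po_a : hom (src x) (src y);
  po_b : hom (tgt x) (tgt y);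
  po_aM : inM M po_a;
  po_bM : inM M po_b;
  po_sq : is_pushout po_a (arr x) (arr y) po_b
}.

Lemma POhom_eq x y (p q : POhom x y) :
  po_a p = po_a q -> po_b p = po_b q -> p = q.
Proof.
  destruct p, q; simpl; intros -> ->; f_equal; apply proof_irrelevance.
Qed.

Lemma pushout_id (x : POob) : is_pushout (idm (src x)) (arr x) (arr x) (idm (tgt x)).
Proof.
  split.
  - rewrite cmp_id_l, cmp_id_r; reflexivity.
  - intros X p q H. rewrite cmp_id_r in H. exists q. split.
    + rewrite cmp_id_r. split; [symmetry; exact H | reflexivity].
    + intros v [_ Hv]. rewrite cmp_id_r in Hv. exact Hv.
Qed.

Lemma pushout_paste {A A' A'' B B' B'' : C}
  (a : hom A A') (a2 : hom A' A'') (f : hom A B) (f' : hom A' B') (f'' : hom A'' B'')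
  (b : hom B B') (b2 : hom B' B'') :
  is_pushout a f f' b -> is_pushout a2 f' f'' b2 ->
  is_pushout (a2 ∘ a) f f'' (b2 ∘ b).
Proof.
  intros [c1 u1] [c2 u2]. split.
  - rewrite cmp_assoc, c2, <- cmp_assoc, c1, cmp_assoc; reflexivity.
  - intros X p q H.
    destruct (u1 X (p ∘ a2) q) as [u [[Hu1 Hu2] Uu]].
    { rewrite <- cmp_assoc; exact H. }
    destruct (u2 X p u) as [v [[Hv1 Hv2] Uv]].
    { symmetry; exact Hu1. }
    exists v. split.
    + split; [exact Hv1 | rewrite cmp_assoc, Hv2; exact Hu2].
    + intros w [Hw1 Hw2]. apply Uv. split; [exact Hw1|].
      apply Uu. split.
      * rewrite <- cmp_assoc, <- c2, cmp_assoc, Hw1; reflexivity.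
      * rewrite <- cmp_assoc; exact Hw2.
Qed.

Definition POid (x : POob) : POhom x x :=
  {| po_a := idm _; po_b := idm _;
     po_aM := M_iso M (iso_id _); po_bM := M_iso M (iso_id _);
     po_sq := pushout_id x |}.

Definition POcmp x y z (g : POhom y z) (f : POhom x y) : POhom x z :=
  {| po_a := po_a g ∘ po_a f; po_b := po_b g ∘ po_b f;
     po_aM := M_comp M (po_aM g) (po_aM f);
     po_bM := M_comp M (po_bM g) (po_bM f);
     po_sq := pushout_paste (po_sq f) (po_sq g) |}.

Definition POv : Category.
Proof.
  refine {| ob := POob; hom := POhom; idm := POid; cmp := POcmp |}.
  - intros; apply POhom_eq; apply cmp_id_l.
  - intros; apply POhom_eq; apply cmp_id_r.
  - intros; apply POhom_eq; apply cmp_assoc.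
Defined.

Definition Sfun : Functor POv (CM M).
Proof.
  refine {| fob := fun x : POv => (src x : CM M);
            fhom := fun x y (p : hom x y) =>
                      (exist _ (po_a p) (po_aM p) : @hom (CM M) (src x) (src y)) |}.
  - intros; apply Mhom_eq; reflexivity.
  - intros; apply Mhom_eq; reflexivity.
Defined.
End POv.

Definition op_cartesian {E B : Category} (P : Functor E B) {e e' : E}
  (phi : hom e e') : Prop :=
  forall (e'' : E) (psi : hom e e'') (g : hom (P e') (P e'')),
    g ∘ fhom P phi = fhom P psi ->
    exists chi : hom e' e'', (chi ∘ phi = psi /\ fhom P chi = g) /\
      forall chi' : hom e' e'', chi' ∘ phi = psi /\ fhom P chi' = g -> chi' = chi.

(* Every f : P e -> b' has an op-Cartesian lifting at e: a phi : e -> e' with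
   P e' = b' and P phi = f (up to transport along that equality of objects). *)
Definition is_opfibration {E B : Category} (P : Functor E B) : Prop :=
  forall (e : E) (b' : B) (f : hom (P e) b'),
    exists (e' : E) (phi : hom e e') (H : P e' = b'),
      match H in _ = y return hom (P e) y with eq_refl => fhom P phi end = f
      /\ op_cartesian P phi.


(* Every morphism (α, β) : f -> f' of PO_v(C, M) is op-Cartesian: given
   ψ : f -> f'' and g with g ∘ α = S ψ, the pushout property of the square
   (α, β) yields the unique u with u ∘ f' = f'' ∘ g and u ∘ β equal to the
   target component of ψ; the square (g, u) is then a pushout by the
   cancellation law for pushout squares, and u is in M because M is stable
   under pushout. Liftings of M-morphisms exist because C has pushouts
   along M. *)

Lemma pushout_hom_eq {C : Category} {A A' B B' X : C}
  {a : hom A A'} {f : hom A B} {f' : hom A' B'} {b : hom B B'}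
  (u v : hom B' X) :
  is_pushout a f f' b -> u ∘ f' = v ∘ f' -> u ∘ b = v ∘ b -> u = v.
Proof.
  intros [sq univ] Hf' Hb.
  destruct (univ X (v ∘ f') (v ∘ b)) as [w [_ Uw]].
  { rewrite <- !cmp_assoc, sq; reflexivity. }
  rewrite (Uw u), (Uw v); split; auto.
Qed.

Lemma pushout_cancel {C : Category} {A A' A'' B B' B'' : C}
  (a : hom A A') (a2 : hom A' A'') (f : hom A B) (f' : hom A' B')
  (f'' : hom A'' B'') (b : hom B B') (u : hom B' B'') :
  is_pushout a f f' b -> is_pushout (a2 ∘ a) f f'' (u ∘ b) ->
  u ∘ f' = f'' ∘ a2 -> is_pushout a2 f' f'' u.
Proof.
  intros Hleft [_ univ] sq. split; [symmetry; exact sq |].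
  intros X p q Hpq.
  destruct (univ X p (q ∘ b)) as [w [[Hwf'' Hwub] Uw]].
  { rewrite cmp_assoc, Hpq, <- cmp_assoc, (proj1 Hleft), cmp_assoc.
    reflexivity. }
  assert (Hwu : w ∘ u = q).
  { apply (pushout_hom_eq _ _ Hleft).
    - rewrite <- cmp_assoc, sq, cmp_assoc, Hwf''; exact Hpq.
    - rewrite <- cmp_assoc; exact Hwub. }
  exists w. split; [split; assumption |].
  intros v [Hvf'' Hvu]. apply Uw. split; [exact Hvf'' |].
  rewrite cmp_assoc, Hvu; reflexivity.
Qed.

Section SourceFunctor.
Variables (C : Category) (M : StableMonics C).
Hypothesis M_po : M_stable_under_pushout M.

Lemma POhom_op_cartesian (x y : POv M) (phi : hom x y) :
  op_cartesian (Sfun M) phi.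
Proof.
  intros z psi g Hg; simpl in g, Hg.
  destruct g as [g gM].
  assert (Hga : g ∘ po_a phi = po_a psi) by exact (f_equal (@proj1_sig _ _) Hg).
  pose proof (po_sq phi) as Hphi. pose proof (po_sq psi) as Hpsi.
  destruct (proj2 Hphi _ (arr z ∘ g) (po_b psi)) as [u [[Hu_arr Hu_b] _]].
  { rewrite <- cmp_assoc, Hga; exact (proj1 Hpsi). }
  assert (Hsq : is_pushout g (arr y) (arr z) u).
  { apply (pushout_cancel (po_a phi) g (arr x) (arr y) (arr z) (po_b phi) u Hphi).
    - rewrite Hga, Hu_b; exact Hpsi.
    - exact Hu_arr. }
  exists (@Build_POhom C M y z g u gM (M_po _ _ _ _ _ _ _ _ gM Hsq) Hsq).
  split; [split |].
  - apply POhom_eq; cbn; assumption.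
  - apply Mhom_eq; reflexivity.
  - intros chi [Hcomp Hsrc].
    assert (Ha : po_a chi = g) by exact (f_equal (@proj1_sig _ _) Hsrc).
    apply POhom_eq; cbn; [exact Ha |].
    apply (pushout_hom_eq _ _ Hphi).
    + rewrite <- (proj1 (po_sq chi)), Ha, Hu_arr; reflexivity.
    + rewrite Hu_b; exact (f_equal (@po_b _ _ _ _) Hcomp).
Qed.

Lemma Sfun_opfibration : has_pushouts_along M -> is_opfibration (Sfun M).
Proof.
  intros Hpush x A' [a aM].
  destruct (Hpush _ _ _ a (arr x) aM) as [B' [f' [b Hpo]]].
  exists (Build_POob f'),
    (@Build_POhom C M x (Build_POob f') a b aM (M_po _ _ _ _ _ _ _ _ aM Hpo) Hpo),
    eq_refl.
  split; [apply Mhom_eq; reflexivity | apply POhom_op_cartesian].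
Qed.

End SourceFunctor.

Theorem mainTheorem5 (C : Category) (M : StableMonics C) :
  has_pushouts_along M ->
  M_stable_under_pushout M ->
  is_opfibration (Sfun M) /\
  (* op-Cartesian liftings are given by pushouts: for an object f : A -> B and
     alpha : A >-> A' in M, and a pushout  A' --f'--> B' <--beta-- B  of
     (alpha, f), the PO_v-morphism (alpha, beta) : f -> f' is op-Cartesian. *)
  (forall (A A' B B' : C) (f : hom A B) (alpha : hom A A')
          (f' : hom A' B') (beta : hom B B'),
      inM M alpha -> is_pushout alpha f f' beta ->
      forall phi : @hom (POv M) (Build_POob f) (Build_POob f'),
        po_a phi = alpha -> po_b phi = beta ->
        op_cartesian (Sfun M) phi).
Proof.
  intros Hpush M_po. split.
  - exact (@Sfun_opfibration C M M_po Hpush).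
  - intros; apply (@POhom_op_cartesian C M M_po).
Qed.
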